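(* Let $G=(V,E)$ be a chordal graph on a non-empty finite vertex set $V$, and let $\{A_v\}_{v\in V}$ be events in a probability space with $\bigcup_{v\in V}A_v\neq\emptyset$. For non-empty $J\subseteq V$ put $B_J:=\bigcap_{i\in J}A_i\cap\bigcap_{i\in V\setminus J}\overline{A_i}$, and let \[ \alpha'(G):=\max\{\,c(G[J]) : J\subseteq V,\ J\neq\emptyset,\ B_J\neq\emptyset\,\}. \] Then for every integer $r\ge1$, \[ \Pr\Big(\bigcup_{v\in V} A_v\Big) \ge \frac{1}{\alpha'(G)} \sum_{\substack{I\in\mathscr{C}(G)\\ |I|\le 2r}} (-1)^{|I|-1}\Pr\Big(\bigcap_{i\in I} A_i\Big) \quad\text{and}\quad \Pr\Big(\bigcup_{v\in V} A_v\Big) \ge \frac{1}{\alpha'(G)} \sum_{I\in\mathscr{C}(G)} (-1)^{|I|-1}\Pr\Big(\bigcap_{i\in I} A_i\Big). \] In particular, if $G[J]$ is connected for every non-empty $J\subseteq V$ with $B_J\neq\emptyset$, then $\Pr\big(\bigcup_{v\in V}A_v\big)=\sum_{I\in\mathscr{C}(G)}(-1)^{|I|-1}\Pr\big(\bigcap_{i\in I}A_i\big)$.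
   Context: A graph is chordal if it contains no cycle of length four or more as an induced subgraph. $\mathscr{C}(G)$ denotes the clique complex of $G$: the set of all non-empty subsets $I\subseteq V$ whose elements are pairwise adjacent in $G$. $G[J]$ is the subgraph induced on $J$, $c(\cdot)$ is the number of connected components, and $\overline{A}$ is the complement of the event $A$. *)

From HB Require Import structures.
From mathcomp Require Import all_boot all_order all_algebra.
From Stdlib Require Import ClassicalEpsilon.

Set Implicit Arguments.
Unset Strict Implicit.
Unset Printing Implicit Defensive.

Import Order.TTheory GRing.Theory Num.Theory.
Local Open Scope ring_scope.

(* A (simple) graph on a finite vertex type V is a symmetric irreflexive
   relation e : rel V. *)
Definition chordal (V : finType) (e : rel V) : Prop :=
  forall (n : nat) (c : 'I_n -> V), (4 <= n)%N -> injective c ->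
    ~ (forall i j : 'I_n,
         e (c i) (c j) =
         ((val j == (val i).+1 %% n)%N || (val i == (val j).+1 %% n)%N)).

Definition clique (V : finType) (e : rel V) (I : {set V}) : bool :=
  (I != set0) && [forall x in I, forall y in I, (x != y) ==> e x y].

Definition ncomp_induced (V : finType) (e : rel V) (J : {set V}) : nat :=
  n_comp (fun x y => [&& x \in J, y \in J & e x y]) (mem J).

(* A probability space: a (finitely additive) probability measure Pr defined
   on an algebra of events of a sample space Omega.  Every (countably
   additive) probability space is an instance. *)
Record probSpace (R : realFieldType) (Omega : Type) := ProbSpace {
  meas : (Omega -> Prop) -> Prop;
  Pr : (Omega -> Prop) -> R;
  meas_full : meas (fun _ => True);
  meas_compl : forall X, meas X -> meas (fun w => ~ X w);
  meas_inter : forall X Y, meas X -> meas Y -> meas (fun w => X w /\ Y w);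
  Pr_ext : forall X Y, (forall w, X w <-> Y w) -> Pr X = Pr Y;
  Pr_ge0 : forall X, meas X -> 0 <= Pr X;
  Pr_full : Pr (fun _ => True) = 1;
  Pr_add : forall X Y, meas X -> meas Y -> (forall w, X w -> Y w -> False) ->
             Pr (fun w => X w \/ Y w) = Pr X + Pr Y
}.

Definition pdec (P : Prop) : bool :=
  if excluded_middle_informative P then true else false.

Definition atomB (V : finType) (Omega : Type) (A : V -> Omega -> Prop)
  (J : {set V}) : Omega -> Prop :=
  fun w => (forall i, i \in J -> A i w) /\ (forall i, i \notin J -> ~ A i w).

Definition alpha' (V : finType) (e : rel V) (Omega : Type)
  (A : V -> Omega -> Prop) : nat :=
  \max_(J : {set V} | (J != set0) && pdec (exists w, atomB A J w))
     ncomp_induced e J.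

Definition unionA (V : finType) (Omega : Type) (A : V -> Omega -> Prop) :=
  fun w => exists v, A v w.
Definition interA (V : finType) (Omega : Type) (A : V -> Omega -> Prop)
  (I : {set V}) := fun w => forall i, i \in I -> A i w.

(* Split the sample space into the atoms B_J. Both sides of the inequalities
   are linear in the probabilities of the atoms: the union gives weight 1 to
   every atom with J non-empty, while, since A_I is the union of the B_J with
   I \subset J, the clique sum truncated at size m gives B_J the weight
   chi_m(J), the alternating count of the cliques of G[J] of size at most m.
   Deleting a vertex v of J yields
     chi_(m+1)(J) = chi_(m+1)(J - v) + 1 - chi_m(N)
   with N the neighbourhood of v in J - v, and for a chordal graph the number
   of components satisfies c(J) = c(J - v) + 1 - c(N): two neighbours of v
   joined by a path in G[J - v] are already joined inside N, for otherwise a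
   shortest such path avoiding N closes with v into an induced cycle of
   length at least 4. By induction (-1)^m (c(J) - chi_m(J)) >= 0, with
   equality as soon as m >= |J|, and c(J) <= alpha'(G) whenever B_J is
   non-empty. *)

From HB Require Import structures.
From mathcomp Require Import all_boot all_order all_algebra zify ring.
From Stdlib Require Import Lia Classical ClassicalEpsilon.
From Stdlib Require Import FunctionalExtensionality PropExtensionality.

Set Implicit Arguments.
Unset Strict Implicit.
Unset Printing Implicit Defensive.

Import Order.TTheory GRing.Theory Num.Theory.

Lemma card_imset_kernel (T U W : finType) (f : T -> U) (g : T -> W) (A : {set T}) :
  {in A &, forall x y, (f x == f y) = (g x == g y)} -> #|f @: A| = #|g @: A|.
Proof.
move=> fg.
pose h (u : U) := g @: (A :&: f @^-1: [set u]).
have hf : {in A, forall x, h (f x) = [set g x]}.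
  move=> x xA; apply/setP=> w; rewrite inE; apply/imsetP/eqP => [[y]|->].
    by rewrite !inE => /andP[yA /eqP fy] ->; apply/eqP; rewrite -fg // fy.
  by exists x => //; rewrite !inE xA eqxx.
rewrite -(@card_in_imset _ _ h (f @: A)); last first.
  move=> _ _ /imsetP[x1 x1A ->] /imsetP[x2 x2A ->].
  by rewrite !hf // => /set1_inj /eqP; rewrite -fg // => /eqP.
rewrite -imset_comp (eq_in_imset (g := fun x => [set g x])); last first.
  by move=> x xA /=; rewrite hf.
by rewrite (imset_comp (@set1 W) g) card_imset //; apply: set1_inj.
Qed.

Section InducedSubgraph.

Variables (V : finType) (e : rel V).
Hypothesis e_sym : symmetric e.

Definition induced (J : {set V}) : rel V := fun x y => [&& x \in J, y \in J & e x y].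

Definition component (J : {set V}) (x : V) : {set V} := [set y | connect (induced J) x y].

Definition ncomp (J : {set V}) : nat := #|component J @: J|.

Definition nbhd (K : {set V}) (v : V) : {set V} := [set u in K | e v u].

Lemma nbhd_sub K v : nbhd K v \subset K.
Proof. by apply/subsetP=> u; rewrite inE => /andP[]. Qed.

Lemma induced_sym J : symmetric (induced J).
Proof. by move=> x y; rewrite /induced e_sym andbCA. Qed.

Lemma connect_induced_sym J : connect_sym (induced J).
Proof. exact/sym_connect_sym/induced_sym. Qed.

Lemma eq_component J x y : (component J x == component J y) = connect (induced J) x y.
Proof.
apply/eqP/idP => [cxy|xy].
  have : y \in component J y by rewrite inE connect0.
  by rewrite -cxy inE.
apply/setP=> z; rewrite !inE; apply/idP/idP; last exact: connect_trans.
by apply: connect_trans; rewrite connect_induced_sym.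
Qed.

Lemma connect_induced_mem J x y : connect (induced J) x y -> x = y \/ y \in J.
Proof.
move=> /connectP[p]; elim: p x => [|z p IHp] x /=; first by left.
by move=> /andP[/and3P[_ zJ _] /IHp h] /h [<-|]; right.
Qed.

Lemma connect_induced_sub (A B : {set V}) x y :
  A \subset B -> connect (induced A) x y -> connect (induced B) x y.
Proof.
move=> /subsetP AB; apply: connect_sub => a b /and3P[aA bA ab].
by apply: connect1; rewrite /induced AB ?AB.
Qed.

Lemma ncomp_inducedE J : ncomp_induced e J = ncomp J.
Proof.
rewrite /ncomp_induced /n_comp_mem /ncomp.
pose roots_in := [set x in J | roots (induced J) x].
have -> : #|predI (roots (induced J)) (mem J)| = #|roots_in|.
  by apply: eq_card => x; rewrite !inE andbC.
have -> : component J @: J = component J @: roots_in.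
  apply/setP=> S; apply/imsetP/imsetP => [[x xJ ->]|[x]].
    exists (fingraph.root (induced J) x).
      rewrite inE (roots_root (connect_induced_sym J)) andbT.
      by case: (connect_induced_mem (connect_root (induced J) x)) => [<-|].
    by apply/eqP; rewrite eq_component connect_root.
  by rewrite inE => /andP[xJ _] ->; exists x.
apply/esym/card_in_imset => x y; rewrite !inE => /andP[_ /eqP rx] /andP[_ /eqP ry].
by move/eqP; rewrite eq_component => /(fingraph.rootP (connect_induced_sym J)); rewrite rx ry.
Qed.

Lemma ncomp0 : ncomp set0 = 0%N.
Proof. by rewrite /ncomp imset0 cards0. Qed.

Hypotheses (e_irr : irreflexive e) (e_chordal : chordal e).

Section ChordlessPaths.

(* [v] is the apex whose neighbourhood is studied, and also the default
   element of [nth]; paths are indexed by position to match [chordal]. *)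
Variable v : V.

Lemma no_induced_cycle (s : seq V) : uniq s -> (4 <= size s)%N ->
  ~ (forall i j, (i < j)%N -> (j < size s)%N ->
       e (nth v s i) (nth v s j) = (j == i.+1) || ((i == 0%N) && (j == (size s).-1))).
Proof.
move=> us s4 adj; pose c (i : 'I_(size s)) := nth v s i.
apply: (@e_chordal (size s) c s4).
  by move=> i j /eqP; rewrite /c nth_uniq // => /eqP /val_inj.
have succ_mod (j : 'I_(size s)) :
    ((val j).+1 %% size s)%N = if (j.+1 < size s)%N then j.+1 else 0%N.
  case: ltnP => [jn|nj]; first by rewrite modn_small.
  have -> : j.+1 = size s by apply/eqP; rewrite eqn_leq nj ltn_ord.
  exact: modnn.
have cycle_lt (i j : 'I_(size s)) : (i < j)%N ->
    e (c i) (c j) = ((val j == (val i).+1 %% size s)%N || (val i == (val j).+1 %% size s)%N).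
  move=> ij; have jn := ltn_ord j; rewrite /c adj // !succ_mod.
  rewrite (_ : (i.+1 < size s)%N = true) /=; last lia.
  case: ifP => jn1.
    have jlast : (j == (size s).-1 :> nat) = false by apply/negbTE/eqP; lia.
    have ij1 : (i == j.+1 :> nat) = false by apply/negbTE/eqP; lia.
    by rewrite jlast ij1 andbF.
  have jlast : (j == (size s).-1 :> nat) by apply/eqP; lia.
  by rewrite jlast andbT.
move=> i j; case: (ltngtP i j) => [|ji|/val_inj ->]; first exact: cycle_lt.
  by rewrite e_sym cycle_lt // orbC.
rewrite e_irr orbb succ_mod; case: j => j jn /=.
by case: ltnP => ?; apply/esym/negbTE/eqP; lia.
Qed.

Definition upath_in (K : {set V}) (x : seq V) : Prop :=
  [/\ uniq x, {subset x <= K} & forall i, (i.+1 < size x)%N -> e (nth v x i) (nth v x i.+1)].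

Lemma upath_take K x n : upath_in K x -> upath_in K (take n x).
Proof.
case=> ux xK adj; split; [exact: take_uniq | by move=> y /mem_take /xK |].
by move=> i; rewrite size_take_min => ix; rewrite !nth_take; [apply: adj | |]; lia.
Qed.

Lemma upath_drop K x n : upath_in K x -> upath_in K (drop n x).
Proof.
case=> ux xK adj; split; [exact: drop_uniq | by move=> y /mem_drop /xK |].
by move=> i; rewrite size_drop => ix; rewrite !nth_drop addnS; apply: adj; lia.
Qed.

Lemma nth_take_drop (x : seq V) i j l : (i < size x)%N ->
  nth v (take i.+1 x ++ drop j x) l =
  if (l < i.+1)%N then nth v x l else nth v x (j + (l - i.+1)).
Proof.
move=> ix; rewrite nth_cat size_takel //.
by case: ltnP => li; [rewrite nth_take | rewrite nth_drop].
Qed.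

Lemma upath_shortcut K x i j : upath_in K x -> (i < j)%N -> (j < size x)%N ->
  e (nth v x i) (nth v x j) -> upath_in K (take i.+1 x ++ drop j x).
Proof.
move=> [ux xK adj] ij jx eij; have ix : (i < size x)%N by lia.
split.
- apply: subseq_uniq ux; rewrite -[X in subseq _ X](cat_take_drop i.+1 x) subseq_cat2l.
  by rewrite -(subnK ij) -drop_drop drop_subseq.
- by move=> y; rewrite mem_cat => /orP[/mem_take|/mem_drop] /xK.
move=> l; rewrite size_cat size_takel // size_drop => ly; rewrite !nth_take_drop //.
case: (ltngtP l.+1 i.+1) => [li|il|li].
- by apply: adj; lia.
- by rewrite (_ : l.+1 - i.+1 = (l - i.+1).+1)%N ?addnS; [apply: adj | ]; lia.
- have -> : l = i by lia.
  by rewrite subnn addn0.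
Qed.

Lemma chordless_upath_small (K : {set V}) (x : seq V) : v \notin K -> upath_in K x ->
  nth v x 0 \in nbhd K v -> nth v x (size x).-1 \in nbhd K v ->
  (forall k, (0 < k < (size x).-1)%N -> nth v x k \notin nbhd K v) ->
  (forall i j, (i.+1 < j)%N -> (j < size x)%N -> ~~ e (nth v x i) (nth v x j)) ->
  (size x <= 2)%N.
Proof.
move=> vK [ux xK adj] hd tl noN nochord; rewrite leqNgt; apply/negP => x3.
(* Otherwise [v :: x] is an induced cycle. *)
apply: (no_induced_cycle (s := v :: x)) => /=; first by rewrite ux (contra (xK v)).
  by lia.
move=> [|i] [|j] //= ij jx.
  have xjK : nth v x j \in K by apply/xK/mem_nth.
  rewrite eqSS (_ : e v _ = (nth v x j \in nbhd K v)); last by rewrite inE xjK.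
  have [->|j0] := posnP j; first by rewrite hd.
  have [jl|jl] := ltnP j (size x).-1.
    by rewrite (negbTE (noN j _)); [apply/esym/negbTE/norP; split; apply/eqP | ]; lia.
  have -> : j = (size x).-1 by lia.
  by rewrite tl; apply/esym/orP; right; apply/eqP; lia.
rewrite !eqSS orbF; have [->|ji] := eqVneq j i.+1; first by rewrite adj //; lia.
by rewrite (negbTE (nochord i j _ _)); lia.
Qed.

Lemma upath_nbhd_connect (K : {set V}) (x : seq V) : v \notin K -> (0 < size x)%N ->
  upath_in K x -> nth v x 0 \in nbhd K v -> nth v x (size x).-1 \in nbhd K v ->
  connect (induced (nbhd K v)) (nth v x 0) (nth v x (size x).-1).
Proof.
move=> vK; have [n] := ubnP (size x); elim: n x => // n IHn x xn x0 px hd tl.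
have [[k /andP[k0 kx] kN]|noN] :=
  classic (exists2 k, (0 < k < (size x).-1)%N & nth v x k \in nbhd K v).
  apply: (@connect_trans _ _ (nth v x k)).
    have := IHn (take k.+1 x); rewrite size_takel ?nth_take //=; last lia.
    by apply; rewrite ?nth_take //; [lia | exact: upath_take].
  have := IHn (drop k x); rewrite size_drop !nth_drop addn0.
  rewrite (_ : k + (size x - k).-1 = (size x).-1)%N; last lia.
  by apply; rewrite ?nth_drop ?addn0 //; [lia | lia | exact: upath_drop].
have {}noN k : (0 < k < (size x).-1)%N -> nth v x k \notin nbhd K v.
  by move=> kx; apply/negP => kN; apply: noN; exists k.
have [[i [j [ij jx eij]]]|nochord] :=
  classic (exists i j, [/\ (i.+1 < j)%N, (j < size x)%N & e (nth v x i) (nth v x j)]).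
  have ix : (i < size x)%N by lia.
  have := IHn (take i.+1 x ++ drop j x).
  rewrite size_cat size_takel ?size_drop ?nth_take_drop //.
  rewrite (_ : (i.+1 + (size x - j)).-1 < i.+1 = false)%N /=; last lia.
  rewrite (_ : j + _ = (size x).-1)%N; last lia.
  by apply=> //; [lia | apply: upath_shortcut => //; lia].
have {}nochord i j : (i.+1 < j)%N -> (j < size x)%N -> ~~ e (nth v x i) (nth v x j).
  by move=> ij jx; apply/negP => eij; apply: nochord; exists i, j.
have := chordless_upath_small vK px hd tl noN nochord.
case: x {xn IHn noN nochord} x0 px hd tl => [|a [|b [|//]]] //= _ [_ _ ab] hd tl _.
by apply: connect1; rewrite /induced hd tl (ab 0%N).
Qed.

Lemma connect_nbhd (K : {set V}) a b : v \notin K ->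
  a \in nbhd K v -> b \in nbhd K v ->
  connect (induced K) a b -> connect (induced (nbhd K v)) a b.
Proof.
move=> vK aN bN /connectP[p pp eb]; move: bN; rewrite eb.
case: (shortenP pp) => p' pp' up' _ bN.
have p'K : {subset p' <= K}.
  by move=> y /(nthP v) [i ip <-]; have /and3P[] := pathP v pp' i ip.
have := @upath_nbhd_connect K (a :: p') vK isT.
rewrite /= -[nth v _ (size p')]/(nth v (a :: p') (size (a :: p')).-1) nth_last /=.
apply=> //; split=> //.
- by move=> y; rewrite inE => /predU1P[->|/p'K //]; move: aN; rewrite inE => /andP[].
- by move=> i ip; have /and3P[] := pathP v pp' i ip.
Qed.

End ChordlessPaths.

Lemma ncomp_nbhd v (K : {set V}) : v \notin K ->
  ncomp (nbhd K v) = #|component K @: nbhd K v|.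
Proof.
move=> vK; apply: card_imset_kernel => a b aN bN; rewrite !eq_component.
apply/idP/idP; last exact: connect_nbhd.
exact/connect_induced_sub/nbhd_sub.
Qed.

Section DeleteVertex.

Variables (v : V) (J : {set V}).
Hypothesis vJ : v \in J.

Lemma connect_nbhd_apex x u : u \in nbhd (J :\ v) v ->
  connect (induced (J :\ v)) x u -> connect (induced J) x v.
Proof.
rewrite !inE => /andP[/andP[_ uJ] vu] xu; apply: (connect_trans (y := u)).
  exact: connect_induced_sub (subD1set J v) xu.
by apply: connect1; rewrite /induced uJ vJ e_sym.
Qed.

Lemma connect_induced_D1 x y : x \in J :\ v -> connect (induced J) x y ->
  connect (induced (J :\ v)) x y \/
  exists2 u, u \in nbhd (J :\ v) v & connect (induced (J :\ v)) x u.
Proof.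
move=> xK /connectP[p pp ->]; elim: p x xK pp => [|z p IHp] x xK /=; first by left.
move=> /andP[/and3P[xJ zJ xz] pz].
have xz' : induced (J :\ v) x z -> connect (induced (J :\ v)) x z by apply: connect1.
have [zv|zv] := eqVneq z v.
  by right; exists x => //; rewrite inE xK -zv e_sym.
have zK : z \in J :\ v by rewrite !inE zv.
case: (IHp z zK pz) => [zy|[u uN zu]].
  by left; apply: connect_trans zy; apply: xz'; rewrite /induced xK zK.
by right; exists u => //; apply: connect_trans zu; apply: xz'; rewrite /induced xK zK.
Qed.

Lemma connect_apexE x : x \in J :\ v ->
  connect (induced J) x v = [exists u in nbhd (J :\ v) v, connect (induced (J :\ v)) x u].
Proof.
move=> xK; apply/idP/exists_inP => [xv|[u uN xu]]; last exact: connect_nbhd_apex xu.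
case: (connect_induced_D1 xK xv) => [/connect_induced_mem|[u uN xu]]; last by exists u.
by move: xK; rewrite !inE => /andP[xv' _] [/eqP|]; rewrite ?(negbTE xv') ?eqxx.
Qed.

Lemma component_D1 x : x \in J :\ v -> ~~ connect (induced J) x v ->
  component J x = component (J :\ v) x.
Proof.
move=> xK xv; apply/setP=> y; rewrite !inE; apply/idP/idP; last first.
  exact: connect_induced_sub (subD1set J v).
by case/(connect_induced_D1 xK) => // [[u uN /connect_nbhd_apex]] /(_ uN) xv'; rewrite xv' in xv.
Qed.

Lemma components_D1 :
  component J @: J :\ component J v =
  component (J :\ v) @: (J :\ v) :\: component (J :\ v) @: nbhd (J :\ v) v.
Proof.
apply/setP=> S; rewrite !inE; apply/andP/andP => [[Sv /imsetP[x xJ SE]]|].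
  rewrite {S}SE in Sv *.
  have xv : ~~ connect (induced J) x v by rewrite -eq_component.
  have xK : x \in J :\ v by rewrite !inE xJ andbT; apply: contraNneq xv => ->.
  rewrite component_D1 //; split; last exact: imset_f.
  apply/imsetP => -[u uN /eqP]; rewrite eq_component => xu.
  by move/negP: xv; apply; rewrite connect_apexE //; apply/exists_inP; exists u.
case=> SN /imsetP[x xK SE]; rewrite {S}SE in SN *.
have xJ : x \in J by move: xK; rewrite inE => /andP[].
have xv : ~~ connect (induced J) x v.
  rewrite connect_apexE //; apply/exists_inP => -[u uN xu]; move/imsetP: SN; apply.
  by exists u => //; apply/eqP; rewrite eq_component.
by rewrite -component_D1 // eq_component imset_f.
Qed.

End DeleteVertex.

Lemma ncomp_rec v (J : {set V}) : v \in J ->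
  (ncomp J + ncomp (nbhd (J :\ v) v) = ncomp (J :\ v) + 1)%N.
Proof.
move=> vJ; rewrite ncomp_nbhd ?setD11 // /ncomp.
have NK := imsetS (component (J :\ v)) (nbhd_sub (J :\ v) v).
rewrite (cardsD1 (component J v)) imset_f // components_D1 // cardsDS //.
by have := subset_leq_card NK; lia.
Qed.

End InducedSubgraph.

Local Open Scope ring_scope.

Section CliqueSums.

Variables (R : numDomainType) (V : finType) (e : rel V).
Hypotheses (e_sym : symmetric e) (e_irr : irreflexive e) (e_chordal : chordal e).

Definition clique_sum (m : nat) (J : {set V}) : R :=
  \sum_(I : {set V} | clique e I && (I \subset J) && (#|I| <= m)%N) (-1) ^+ (#|I| - 1).

Lemma clique_card_gt0 (I : {set V}) : clique e I -> (0 < #|I|)%N.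
Proof. by rewrite card_gt0 => /andP[]. Qed.

Lemma clique_setU1 v (L : {set V}) : v \notin L ->
  clique e (v |: L) = ((L == set0) || clique e L) && [forall u in L, e v u].
Proof.
move=> vL; rewrite /clique; apply/andP/andP => [[_ /forall_inP cl]|[cL /forall_inP vL']].
  split.
    case: eqP => //= _; apply/forall_inP=> x xL; apply/forall_inP=> y yL.
    by have /forall_inP := cl x (setU1r v xL); apply; rewrite setU1r.
  apply/forall_inP=> u uL; have /forall_inP := cl v (setU11 v L).
  by move/(_ u (setU1r v uL))/implyP; apply; apply: contraNneq vL => ->.
split; first by apply/set0Pn; exists v; exact: setU11.
apply/forall_inP=> x /setU1P xv; apply/forall_inP=> y /setU1P yv; apply/implyP.
case: xv yv => [->|xL] [->|yL]; rewrite ?eqxx //.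
- by move=> _; apply: vL'.
- by move=> _; rewrite e_sym vL'.
move=> xy; move: cL; case: eqP => [L0|_] /=; first by move: xL; rewrite L0 inE.
by move=> /forall_inP/(_ x xL)/forall_inP/(_ y yL)/implyP; apply.
Qed.

Lemma clique_sum0 (J : {set V}) : clique_sum 0 J = 0.
Proof.
rewrite /clique_sum big_pred0 // => I; apply/negbTE/negP => /andP[/andP[cI _]].
by rewrite leqNgt clique_card_gt0.
Qed.

Lemma clique_sum_set0 m : clique_sum m set0 = 0.
Proof.
rewrite /clique_sum big_pred0 // => I; apply/negbTE/negP => /andP[/andP[/andP[]]].
by move=> I0 _; rewrite subset0 (negbTE I0).
Qed.

Lemma subset_nbhd v (J L : {set V}) : v \notin L ->
  (L \subset nbhd e (J :\ v) v) = (L \subset J) && [forall u in L, e v u].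
Proof.
move=> vL; apply/subsetP/andP => [LN|[/subsetP LJ /forall_inP vL'] u uL].
  by split; [apply/subsetP | apply/forall_inP] => u /LN; rewrite !inE => /andP[/andP[]].
by rewrite !inE LJ // vL' // !andbT; apply: contraNneq vL => <-.
Qed.

Lemma clique_sum_apex v (J : {set V}) m : v \in J ->
  \sum_(I : {set V} | clique e I && (I \subset J) && (#|I| <= m.+1)%N && (v \in I))
     (-1) ^+ (#|I| - 1) = 1 - clique_sum m (nbhd e (J :\ v) v).
Proof.
move=> vJ; set N := nbhd e (J :\ v) v.
rewrite (reindex_onto (fun L => v |: L) (fun I => I :\ v)) /=; last first.
  by move=> I /andP[_ vI]; rewrite setD1K.
rewrite (eq_bigl (fun L => ((L == set0) || clique e L) && (L \subset N) && (#|L| <= m)%N));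
  last first.
  move=> L; have [vL|vL] := boolP (v \in L).
    have -> : (L \subset N) = false.
      by apply/negbTE/negP => /subsetP/(_ v vL); rewrite !inE eqxx.
    have -> : ((v |: L) :\ v == L) = false.
      by apply/negbTE/eqP => vLL; move: vL; rewrite -vLL !inE eqxx.
    by rewrite !andbF.
  rewrite setU1K // eqxx andbT setU11 andbT clique_setU1 // subset_nbhd //.
  rewrite cardsU1 vL add1n ltnS subUset sub1set vJ /=.
  by case: [forall u in L, e v u]; rewrite ?andbF ?andbT.
rewrite (bigD1 set0) /=; last by rewrite eqxx sub0set cards0.
rewrite setU0 cards1 subnn expr0; congr (_ + _).
rewrite /clique_sum -sumrN; apply: eq_big => L.
  case: eqP => [->|_] /=; first by rewrite /clique eqxx !andbF.
  by rewrite andbT.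
move=> /andP[/andP[/andP[_ LN] _] L0].
have vL : v \notin L by apply: contraTN LN => vL; apply/subsetPn; exists v; rewrite // !inE eqxx.
rewrite cardsU1 vL add1n subSS subn0 -card_gt0 in L0 *.
by case: #|L| L0 => // n _; rewrite subSS subn0 exprS mulN1r.
Qed.

Lemma clique_sum_rec v (J : {set V}) m : v \in J ->
  clique_sum m.+1 J = clique_sum m.+1 (J :\ v) + 1 - clique_sum m (nbhd e (J :\ v) v).
Proof.
move=> vJ; rewrite {1}/clique_sum (bigID [pred I : {set V} | v \in I]) /= clique_sum_apex //.
rewrite addrC addrA; congr (_ + _ - _); apply: eq_bigl => I.
by rewrite subsetD1; case: (v \in I); rewrite ?andbT ?andbF ?andFb.
Qed.

Lemma clique_sum_alternating m (J : {set V}) :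
  0 <= (-1) ^+ m * ((ncomp e J)%:R - clique_sum m J).
Proof.
elim: m J => [|m IHm] J; first by rewrite clique_sum0 expr0 mul1r subr0 ler0n.
have [n] := ubnP #|J|; elim: n J => // n IHn J Jn.
have [->|[v vJ]] := set_0Vmem J; first by rewrite clique_sum_set0 ncomp0 subrr mulr0.
set K := J :\ v; set N := nbhd e K v.
have cJ : (ncomp e J)%:R = (ncomp e K)%:R + 1 - (ncomp e N)%:R :> R.
  apply: (addIr (ncomp e N)%:R).
  by rewrite subrK -natrD ncomp_rec // natrD mulr1n.
have -> : (-1) ^+ m.+1 * ((ncomp e J)%:R - clique_sum m.+1 J) =
    (-1) ^+ m.+1 * ((ncomp e K)%:R - clique_sum m.+1 K) +
    (-1) ^+ m * ((ncomp e N)%:R - clique_sum m N).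
  by rewrite cJ (@clique_sum_rec v J m vJ) exprS; ring.
apply: addr_ge0 (IHm N); apply: IHn.
by move: Jn; rewrite (cardsD1 v J) vJ.
Qed.

Lemma clique_sum_ncomp m (J : {set V}) : (#|J| <= m)%N -> clique_sum m J = (ncomp e J)%:R.
Proof.
move=> Jm; have clique_sumS : clique_sum m.+1 J = clique_sum m J.
  apply: eq_bigl => I; case: (boolP (I \subset J)) => [/subset_leq_card IJ|_].
    by rewrite (leq_trans IJ Jm) (leq_trans IJ (leqW Jm)).
  by rewrite !andbF.
have ge0 := clique_sum_alternating m J; have := clique_sum_alternating m.+1 J.
rewrite clique_sumS exprS mulN1r mulNr oppr_ge0 => le0.
have /eqP := le_anti (introT andP (conj le0 ge0)).
by rewrite mulf_eq0 signr_eq0 subr_eq0 eq_sym => /eqP.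
Qed.

End CliqueSums.

Section FiniteAdditivity.

Variables (R : realFieldType) (Omega : Type) (PS : probSpace R Omega).

Lemma meas_ext (X Y : Omega -> Prop) : (forall w, X w <-> Y w) -> meas PS X -> meas PS Y.
Proof.
move=> XY; suff -> : X = Y by [].
by apply: functional_extensionality => w; apply: propositional_extensionality.
Qed.

Lemma meas0 : meas PS (fun _ => False).
Proof. by apply: meas_ext (meas_compl (meas_full PS)) => w; split. Qed.

Lemma Pr0 : Pr PS (fun _ => False) = 0.
Proof.
have := Pr_add meas0 meas0 (fun w (f : False) _ => f).
rewrite (@Pr_ext _ _ PS _ (fun _ => False)); last by move=> w; split => [[]|].
by move=> h; apply: (@addrI _ (Pr PS (fun _ => False))); rewrite addr0 -h.
Qed.

Lemma measU (X Y : Omega -> Prop) :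
  meas PS X -> meas PS Y -> meas PS (fun w => X w \/ Y w).
Proof.
move=> mX mY; apply: meas_ext (meas_compl (meas_inter (meas_compl mX) (meas_compl mY))).
by move=> w; split => [/not_and_or [/NNPP|/NNPP]|[]]; tauto.
Qed.

Lemma meas_bigI (T : eqType) (X : T -> Omega -> Prop) (s : seq T) :
  (forall j, meas PS (X j)) -> meas PS (fun w => forall j, j \in s -> X j w).
Proof.
move=> mX; elim: s => [|x s IHs]; first by apply: meas_ext (meas_full PS).
apply: meas_ext (meas_inter (mX x) IHs) => w.
split => [[Xx Xs] j|Xs]; first by rewrite inE => /predU1P[->|/Xs].
by split => [|j js]; apply: Xs; rewrite inE ?eqxx ?js ?orbT.
Qed.

Lemma meas_bigU (T : eqType) (X : T -> Omega -> Prop) (s : seq T) :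
  (forall j, meas PS (X j)) -> meas PS (fun w => exists2 j, j \in s & X j w).
Proof.
move=> mX; elim: s => [|x s IHs]; first by apply: meas_ext meas0 => w; split => // -[].
apply: meas_ext (measU (mX x) IHs) => w.
split => [[Xx|[j js Xj]]|[j]]; [by exists x; rewrite ?inE ?eqxx | exists j => //|].
  by rewrite inE js orbT.
by rewrite inE => /predU1P[-> Xx|js Xj]; [left | right; exists j].
Qed.

Lemma Pr_bigU_disjoint (T : eqType) (X : T -> Omega -> Prop) (s : seq T) :
  uniq s -> (forall j, meas PS (X j)) ->
  (forall j k w, j != k -> X j w -> X k w -> False) ->
  Pr PS (fun w => exists2 j, j \in s & X j w) = \sum_(j <- s) Pr PS (X j).
Proof.
move=> us mX disj; elim: s us => [|x s IHs] /=.
  by move=> _; rewrite big_nil -Pr0; apply: Pr_ext => w; split => // -[].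
move=> /andP[xs us]; rewrite big_cons -IHs // -Pr_add //; last first.
- move=> w Xx [j js Xj]; apply: (disj x j w) => //.
  by apply: contraNneq xs => ->.
- exact: meas_bigU.
apply: Pr_ext => w; split => [[j]|[Xx|[j js Xj]]]; [|by exists x; rewrite ?inE ?eqxx|].
  by rewrite inE => /predU1P[-> Xx|js Xj]; [left | right; exists j].
by exists j; rewrite // inE js orbT.
Qed.

End FiniteAdditivity.

Lemma pdecP (P : Prop) : pdec P <-> P.
Proof. by rewrite /pdec; case: excluded_middle_informative. Qed.

Section Atoms.

Variables (R : realFieldType) (V : finType) (Omega : Type) (PS : probSpace R Omega).
Variable A : V -> Omega -> Prop.
Hypothesis measA : forall v, meas PS (A v).

Definition atom_of (w : Omega) : {set V} := [set i | pdec (A i w)].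

Lemma atomB_of w : atomB A (atom_of w) w.
Proof.
split=> i; rewrite inE; first by move/pdecP.
by move=> /negP nA /pdecP.
Qed.

Lemma atomB_uniq (J J' : {set V}) w : atomB A J w -> atomB A J' w -> J = J'.
Proof.
move=> [JA AJ] [J'A AJ']; apply/setP=> i; apply/idP/idP => iJ.
  by apply: contraT => /AJ'; move/(_ (JA _ iJ)).
by apply: contraT => /AJ; move/(_ (J'A _ iJ)).
Qed.

Lemma meas_atomB J : meas PS (atomB A J).
Proof.
apply: meas_ext (meas_inter (meas_bigI (enum J) measA)
                            (meas_bigI (enum (~: J)) (fun i => meas_compl (measA i)))).
by move=> w; split=> -[JA AJ]; split=> i; move: (JA i) (AJ i); rewrite ?mem_enum ?inE.
Qed.

Lemma Pr_atomB0 J : ~ (exists w, atomB A J w) -> Pr PS (atomB A J) = 0.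
Proof. by move=> noJ; rewrite -(Pr0 PS); apply: Pr_ext => w; split => // Jw; apply: noJ; exists w. Qed.

Lemma Pr_atomB_sum (Q : pred {set V}) :
  Pr PS (fun w => Q (atom_of w)) = \sum_(J | Q J) Pr PS (atomB A J).
Proof.
have disj J J' w : J != J' -> atomB A J w -> atomB A J' w -> False.
  by move=> /eqP JJ' Jw J'w; apply: JJ'; apply: atomB_uniq Jw J'w.
rewrite -big_enum -(Pr_bigU_disjoint (enum_uniq _) meas_atomB disj).
apply: Pr_ext => w; split => [Qw|[J JQ Jw]].
  by exists (atom_of w); [rewrite mem_enum | exact: atomB_of].
by rewrite mem_enum in JQ; rewrite (atomB_uniq (atomB_of w) Jw).
Qed.

Lemma Pr_interA I : Pr PS (interA A I) = \sum_(J : {set V} | I \subset J) Pr PS (atomB A J).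
Proof.
rewrite -Pr_atomB_sum; apply: Pr_ext => w; split => [IA|/subsetP IJ i /IJ].
  by apply/subsetP => i /IA Aiw; rewrite inE; apply/pdecP.
by rewrite inE => /pdecP.
Qed.

Lemma Pr_unionA : Pr PS (unionA A) = \sum_(J : {set V} | J != set0) Pr PS (atomB A J).
Proof.
rewrite -Pr_atomB_sum; apply: Pr_ext => w; split => [[v Avw]|/set0Pn[v]].
  by apply/set0Pn; exists v; rewrite inE; apply/pdecP.
by rewrite inE => /pdecP; exists v.
Qed.

Lemma sum_cliques_atoms (e : rel V) m :
  \sum_(I : {set V} | clique e I && (#|I| <= m)%N) (-1) ^+ (#|I| - 1) * Pr PS (interA A I)
  = \sum_(J : {set V}) Pr PS (atomB A J) * clique_sum R e m J.
Proof.
under eq_bigr => I _ do rewrite Pr_interA big_distrr.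
rewrite (exchange_big_dep xpredT) //=; apply: eq_bigr => J _.
rewrite /clique_sum big_distrr; apply: eq_big => [I|I _]; last by rewrite mulrC.
by case: (clique e I); case: (I \subset J); case: (#|I| <= m)%N.
Qed.

Section Alpha.

Variable e : rel V.
Hypothesis e_sym : symmetric e.

Lemma alpha'_ge J : J != set0 -> (exists w, atomB A J w) -> (ncomp e J <= alpha' e A)%N.
Proof.
by move=> J0 Jw; rewrite -ncomp_inducedE //; apply: leq_bigmax_cond; rewrite J0; apply/pdecP.
Qed.

Lemma alpha'_gt0 : (exists w v, A v w) -> (0 < alpha' e A)%N.
Proof.
move=> [w [v Avw]]; have vJ : v \in atom_of w by rewrite inE; apply/pdecP.
apply: leq_trans (alpha'_ge _ _); last by exists w; apply: atomB_of.
  by rewrite card_gt0; apply/set0Pn; exists (component e (atom_of w) v); apply: imset_f.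
by apply/set0Pn; exists v.
Qed.

Lemma sum_atoms_ncomp_le :
  \sum_(J : {set V}) Pr PS (atomB A J) * (ncomp e J)%:R <= (alpha' e A)%:R * Pr PS (unionA A).
Proof.
rewrite (bigD1 set0) //= ncomp0 mulr0 add0r Pr_unionA mulr_sumr; apply: ler_sum => J J0.
have [Jw|noJ] := classic (exists w, atomB A J w); last by rewrite Pr_atomB0 // mul0r mulr0.
rewrite mulrC; apply: ler_wpM2r; first exact/Pr_ge0/meas_atomB.
by rewrite ler_nat alpha'_ge.
Qed.

Lemma sum_atoms_ncomp_connected :
  (forall J : {set V}, J != set0 -> (exists w, atomB A J w) -> ncomp_induced e J = 1%N) ->
  \sum_(J : {set V}) Pr PS (atomB A J) * (ncomp e J)%:R = Pr PS (unionA A).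
Proof.
move=> conn; rewrite (bigD1 set0) //= ncomp0 mulr0 add0r Pr_unionA; apply: eq_bigr => J J0.
have [Jw|noJ] := classic (exists w, atomB A J w); last by rewrite Pr_atomB0 // mul0r.
by rewrite -ncomp_inducedE // conn // mulr1.
Qed.

End Alpha.

End Atoms.

Theorem mainTheorem4 (R : realFieldType) (V : finType) (e : rel V)
  (Omega : Type) (PS : probSpace R Omega) (A : V -> Omega -> Prop) :
  symmetric e -> irreflexive e -> chordal e -> (0 < #|V|)%N ->
  (forall v, meas PS (A v)) ->
  (exists w, exists v, A v w) ->
  (forall r : nat, (1 <= r)%N ->
     Pr PS (unionA A) >=
     (alpha' e A)%:R^-1 *
       \sum_(I : {set V} | clique e I && (#|I| <= 2 * r)%N)
          (-1) ^+ (#|I| - 1)%N * Pr PS (interA A I))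
  /\
  Pr PS (unionA A) >=
     (alpha' e A)%:R^-1 *
       \sum_(I : {set V} | clique e I)
          (-1) ^+ (#|I| - 1)%N * Pr PS (interA A I)
  /\
  ((forall J : {set V}, J != set0 -> (exists w, atomB A J w) ->
       ncomp_induced e J = 1%N) ->
   Pr PS (unionA A) =
     \sum_(I : {set V} | clique e I)
        (-1) ^+ (#|I| - 1)%N * Pr PS (interA A I)).
Proof.
move=> e_sym e_irr e_chordal _ measA someA.
have alpha_gt0 : (0 : R) < (alpha' e A)%:R by rewrite ltr0n alpha'_gt0.
have full_sum : \sum_(I : {set V} | clique e I) (-1) ^+ (#|I| - 1) * Pr PS (interA A I) =
    \sum_(J : {set V}) Pr PS (atomB A J) * (ncomp e J)%:R.
  rewrite (eq_bigl (fun I => clique e I && (#|I| <= #|V|)%N)) => [|I]; last first.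
    by rewrite max_card andbT.
  rewrite sum_cliques_atoms //; apply: eq_bigr => J _.
  by rewrite clique_sum_ncomp // max_card.
split; [|split].
- move=> r _; rewrite ler_pdivrMl // sum_cliques_atoms //.
  apply: le_trans (sum_atoms_ncomp_le measA e_sym); apply: ler_sum => J _.
  apply: ler_wpM2l; first exact/Pr_ge0/meas_atomB.
  have := clique_sum_alternating R e_sym e_irr e_chordal (2 * r) J.
  by rewrite -signr_odd mul2n odd_double mul1r subr_ge0.
- by rewrite ler_pdivrMl // full_sum (sum_atoms_ncomp_le measA e_sym).
- by move=> conn; rewrite full_sum (sum_atoms_ncomp_connected measA e_sym).
Qed.
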